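(* Let $A$ be a real symmetric nonsingular $n\times n$ matrix and let $L$ be a linear subspace of $\mathbb R^n$ with orthogonal complement $L^*$. Suppose $A$ is positive definite on $L$ (i.e. $\mathbf x^TA\mathbf x>0$ for all nonzero $\mathbf x\in L$) and $A^{-1}$ is positive definite on $L^*$ (i.e. $\mathbf y^TA^{-1}\mathbf y>0$ for all nonzero $\mathbf y\in L^*$). Then $A$ is positive definite. *)

From mathcomp Require Import all_boot all_order all_algebra.
Set Implicit Arguments. Unset Strict Implicit. Unset Printing Implicit Defensive.
Import GRing.Theory Num.Theory.
Local Open Scope ring_scope.

Definition qform (R : realFieldType) (n : nat) (A : 'M[R]_n) (x : 'rV[R]_n) : R :=
  (x *m A *m x^T) 0 0.

(* A subspace L of R^n is represented (as in mxalgebra) by a matrix whose row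
   space is L; x \in L iff (x <= L)%MS. *)
Definition in_orth (R : realFieldType) (n m : nat) (L : 'M[R]_(m, n)) (y : 'rV[R]_n) : Prop :=
  L *m y^T = 0.

Definition posdef_on (R : realFieldType) (n : nat) (A : 'M[R]_n) (P : 'rV[R]_n -> Prop) : Prop :=
  forall x : 'rV[R]_n, P x -> x != 0 -> 0 < qform A x.

Definition posdef (R : realFieldType) (n : nat) (A : 'M[R]_n) : Prop :=
  posdef_on A (fun _ => True).

From mathcomp Require Import all_boot all_order all_algebra ring.
Import Order.TTheory GRing.Theory Num.Theory.
Local Open Scope ring_scope.
Set Implicit Arguments. Unset Strict Implicit.

(* Every z decomposes as z = x + y A^-1 with x in L and y in L^*: the space
   L^* A^-1 meets L trivially (a vector v = y A^-1 of L has v A v^T = v y^T = 0)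
   and has the complementary dimension.  The cross term x A (y A^-1)^T = x y^T
   vanishes, so z A z^T = x A x^T + y A^-1 y^T, a sum of two nonnegative terms
   that are not both zero when z != 0. *)

Lemma mulmx_tr_orth (R : fieldType) (n m : nat) (L : 'M[R]_(m, n)) (x y : 'rV[R]_n) :
  (x <= L)%MS -> L *m y^T = 0 -> x *m y^T = 0.
Proof. by move=> /submxP[u ->] Ly; rewrite -mulmxA Ly mulmx0. Qed.

Lemma in_orth_ker (R : realFieldType) (n m : nat) (L : 'M[R]_(m, n)) (u : 'rV[R]_n) :
  in_orth L (u *m kermx L^T).
Proof.
by rewrite /in_orth trmx_mul mulmxA -{1}(trmxK L) -trmx_mul mulmx_ker trmx0 mul0mx.
Qed.

Lemma qform0 (R : realFieldType) (n : nat) (A : 'M[R]_n) : qform A 0 = 0.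
Proof. by rewrite /qform !mul0mx mxE. Qed.

Lemma posdef_on_ge0 (R : realFieldType) (n : nat) (A : 'M[R]_n) P x :
  posdef_on A P -> P x -> 0 <= qform A x.
Proof.
move=> PA Px; have [->|x_neq0] := eqVneq x 0; first by rewrite qform0.
exact/ltW/PA.
Qed.

Lemma qformD (R : realFieldType) (n : nat) (A : 'M[R]_n) (x w : 'rV[R]_n) :
  A^T = A -> qform A (x + w) = qform A x + qform A w + (x *m A *m w^T) 0 0 *+ 2.
Proof.
move=> symA; have wAx : w *m A *m x^T = (x *m A *m w^T)^T.
  by rewrite !trmx_mul trmxK symA mulmxA.
rewrite /qform linearD !mulmxDl !mulmxDr wAx !mxE /=.
ring.
Qed.

Lemma row_full_addsmx (F : fieldType) (m1 m2 n : nat) (U : 'M[F]_(m1, n)) (V : 'M[F]_(m2, n)) :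
  (U :&: V = 0)%MS -> (n <= \rank U + \rank V)%N -> row_full (U + V)%MS.
Proof. by move=> UV0; rewrite -mxrank_sum_cap UV0 mxrank0 addn0 col_leq_rank. Qed.

Section SymmetricInverse.

Variables (R : realFieldType) (n m : nat) (A : 'M[R]_n) (L : 'M[R]_(m, n)).
Hypotheses (symA : A^T = A) (unitA : A \in unitmx).

Local Notation K := (kermx L^T *m invmx A).

Lemma trmx_invmx_sym : (invmx A)^T = invmx A.
Proof. by rewrite trmx_inv symA. Qed.

Lemma qform_mulmx_inv (y : 'rV[R]_n) : qform A (y *m invmx A) = qform (invmx A) y.
Proof.
by rewrite /qform trmx_mul trmx_invmx_sym -(mulmxA y) mulVmx // mulmx1 mulmxA.
Qed.

Lemma mulmx_inv_orth (x y : 'rV[R]_n) :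
  (x <= L)%MS -> in_orth L y -> x *m A *m (y *m invmx A)^T = 0.
Proof.
move=> xL Ly; rewrite trmx_mul trmx_invmx_sym mulmxA -(mulmxA x) mulmxV //.
by rewrite mulmx1 (mulmx_tr_orth xL).
Qed.

Lemma submx_compl (v : 'rV[R]_n) :
  (v <= K)%MS -> exists2 y, in_orth L y & v = y *m invmx A.
Proof.
by move=> /submxP[u ->]; exists (u *m kermx L^T); [apply: in_orth_ker | rewrite mulmxA].
Qed.

Hypothesis posL : posdef_on A (fun x => (x <= L)%MS).

Lemma capmx_compl0 : (L :&: K = 0)%MS.
Proof.
apply/eqP; rewrite -submx0; apply/rV_subP => v; rewrite sub_capmx submx0.
case/andP=> vL /submx_compl[y Ly def_v].
have qv0 : qform A v = 0 by rewrite /qform {2}def_v mulmx_inv_orth ?mxE.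
apply: contraT => v_neq0.
by have := posL vL v_neq0; rewrite qv0 ltxx.
Qed.

Lemma row_full_addsmx_compl : row_full (L + K)%MS.
Proof.
apply: row_full_addsmx capmx_compl0 _.
rewrite mxrankMfree ?row_free_unit ?unitmx_inv // mxrank_ker mxrank_tr.
by rewrite subnKC // rank_leq_col.
Qed.

Lemma orth_compl_decomp (z : 'rV[R]_n) :
  exists x y, [/\ (x <= L)%MS, in_orth L y & z = x + y *m invmx A].
Proof.
have /sub_addsmxP[[u1 u2] /= ->] := submx_full z row_full_addsmx_compl.
have [y Ly ->] := submx_compl (submxMl u2 K).
by exists (u1 *m L), y; rewrite submxMl.
Qed.

End SymmetricInverse.

Theorem theorem3p4 (R : realFieldType) (n m : nat) (A : 'M[R]_n) (L : 'M[R]_(m, n)) :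
  A^T = A ->
  A \in unitmx ->
  posdef_on A (fun x => (x <= L)%MS) ->
  posdef_on (invmx A) (fun y => in_orth L y) ->
  posdef A.
Proof.
move=> symA unitA posL posLorth z _ z_neq0.
have [x [y [xL Ly def_z]]] := orth_compl_decomp symA unitA posL z.
have qz : qform A z = qform A x + qform (invmx A) y.
  rewrite def_z qformD // (mulmx_inv_orth symA unitA xL Ly) mxE mul0rn addr0.
  by rewrite qform_mulmx_inv.
rewrite qz; have [x0|x_neq0] := eqVneq x 0.
  rewrite x0 qform0 add0r; apply: posLorth => //.
  by apply: contra z_neq0 => /eqP y0; rewrite def_z x0 y0 mul0mx addr0.
by rewrite ltr_wpDr ?(posdef_on_ge0 posLorth) ?posL.
Qed.
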